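(* For every $\varepsilon>0$ and every $A\subseteq\mathbb R$ containing a nonempty open interval, $\mathfrak{ss}_e^\varepsilon=\mathfrak{ss}_l^A=\mathfrak{ss}_c$.
   Context: Let $\mathfrak S_{cc}$ be the set of all sequences $\mathbf a=\langle a_i:i\in\omega\rangle$ of rational numbers with $a_i\to0$ such that $\sum_i a_i$ is conditionally convergent (converges to a real number, with the positive terms summing to $+\infty$ and the negative terms to $-\infty$). Let $[\omega]^\omega_\omega$ be the set of infinite coinfinite subsets of $\omega$; for such $X$ with increasing enumeration $\langle i_n\rangle$, $\sum_X\mathbf a$ denotes $\sum_n a_{i_n}$. $\mathfrak{ss}_c$ is the least cardinality of $\mathcal X\subseteq[\omega]^\omega_\omega$ such that every $\mathbf a\in\mathfrak S_{cc}$ has some $X\in\mathcal X$ with $\sum_X\mathbf a$ convergent (to a real number). For $A\subseteq\mathbb R$, $\mathfrak{ss}_l^A$ is the least cardinality of $\mathcal X\subseteq[\omega]^\omega_\omega$ such that every $\mathbf a\in\mathfrak S_{cc}$ has some $X\in\mathcal X$ for which $\sum_X\mathbf a$ converges to a limit in $A$. For $\varepsilon>0$, $\mathfrak{ss}_e^\varepsilon$ is the least cardinality of $\mathcal X\subseteq[\omega]^\omega_\omega$ such that every $\mathbf a\in\mathfrak S_{cc}$ has some $X\in\mathcal X$ for which $\sum_X\mathbf a$ converges to a limit in $(\sum\mathbf a-\varepsilon,\sum\mathbf a+\varepsilon)$. *)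

From HB Require Import structures.
From mathcomp Require Import all_boot all_order all_algebra.
From mathcomp Require Import all_classical all_reals all_analysis.
Set Implicit Arguments. Unset Strict Implicit. Unset Printing Implicit Defensive.
Import Order.TTheory GRing.Theory Num.Theory.
Import numFieldNormedType.Exports.
Local Open Scope classical_set_scope.
Local Open Scope ring_scope.

Definition inf_coinf (X : set nat) : Prop :=
  infinite_set X /\ infinite_set (~` X).

Definition incr_enum (X : set nat) (e : nat -> nat) : Prop :=
  (forall m n : nat, (m < n)%N -> (e m < e n)%N) /\ range e = X.

Definition rseq (R : realType) (a : nat -> rat) : nat -> R :=
  fun n => ratr (a n).

Definition S_cc (R : realType) (a : nat -> rat) : Prop :=
  rseq R a @ \oo --> 0 /\
  (exists s : R, series (rseq R a) @ \oo --> s) /\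
  series (fun n => Num.max (rseq R a n) 0) @ \oo --> +oo /\
  series (fun n => Num.min (rseq R a n) 0) @ \oo --> -oo.

Definition subsum_to (R : realType) (a : nat -> rat) (X : set nat) (l : R) : Prop :=
  exists e : nat -> nat, incr_enum X e /\
    series (fun n => rseq R a (e n)) @ \oo --> l.

Definition ss_c_family (R : realType) (F : set (set nat)) : Prop :=
  F `<=` inf_coinf /\
  forall a, S_cc R a -> exists2 X, F X & exists l : R, subsum_to a X l.

Definition ss_l_family (R : realType) (A : set R) (F : set (set nat)) : Prop :=
  F `<=` inf_coinf /\
  forall a, S_cc R a -> exists2 X, F X & exists2 l : R, A l & subsum_to a X l.

Definition ss_e_family (R : realType) (eps : R) (F : set (set nat)) : Prop :=
  F `<=` inf_coinf /\
  forall a, S_cc R a -> exists2 X, F X &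
    exists s l : R, series (rseq R a) @ \oo --> s /\ subsum_to a X l /\
                    `|l - s| < eps.

(* "least cardinality of a family with property P" equals
   "least cardinality of a family with property Q" *)
Definition same_min_card (P Q : set (set nat) -> Prop) : Prop :=
  (forall F, P F -> exists G, Q G /\ (G #<= F)%card) /\
  (forall G, Q G -> exists F, P F /\ (F #<= G)%card).

From HB Require Import structures.
From mathcomp Require Import all_boot all_order all_algebra.
From mathcomp Require Import all_classical all_reals all_analysis.
From mathcomp Require Import lra zify.
Import Order.TTheory GRing.Theory Num.Theory.
Import numFieldNormedType.Exports.
Local Open Scope classical_set_scope.
Local Open Scope ring_scope.

(* Every ss_e^eps- or ss_l^A-family is an ss_c-family. Conversely, let F be
   an ss_c-family. Since the positive and the negative parts of a conditionally
   convergent series both diverge while its terms tend to 0, flipping finitely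
   many indices of a set X (beyond the point where the terms are small)
   moves a convergent subsum along X into any prescribed open interval. Hence
   the finite modifications of the members of F form an ss_l^A- and an
   ss_e^eps-family. There are no more of them than members of F, because
   |F x nat| = |F| for infinite F (Zorn) and F is infinite, even uncountable:
   for countably many sets X_i, the series made of the pairs 1/(k+1), -1/(k+1)
   placed so that, over infinitely many dyadic blocks of pairs, the positive
   terms lie in X_i and the negative ones outside, is conditionally convergent
   while its subseries along X_i gains at least 1/2 over each such block. *)

Lemma card_le_inj (T U : Type) (A : set T) (B : set U) (f : T -> U) :
  {in A &, injective f} -> (forall x, A x -> B (f x)) -> (A #<= B)%card.
Proof.
move=> f_inj fAB; apply: (@card_le_trans _ _ _ (f @` A)).
  by have /card_eqPle[] := card_esym (inj_card_eq f_inj).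
by apply: subset_card_le => _ [x Ax <-]; exact: fAB.
Qed.

Section SetXnat.
Variables (T : pointedType) (F : set T).

Definition pairing_dom (S : set (T * nat * T)) : set T :=
  [set x | exists k y, S (x, k, y)].

(* [S] is the graph of a bijection from [D * nat] onto [D], for a subset
   [D] of [F], namely [D = pairing_dom S]. *)
Definition nat_pairing (S : set (T * nat * T)) : Prop :=
  [/\ (forall x k y, S (x, k, y) -> [/\ F x, F y & pairing_dom S y]),
      (forall p y y', S (p, y) -> S (p, y') -> y = y'),
      (forall p p' y, S (p, y) -> S (p', y) -> p = p') &
      (forall x, pairing_dom S x -> forall k, exists y, S (x, k, y))].

Lemma nat_pairing_bigcup (FF : set (set (T * nat * T))) :
  FF `<=` nat_pairing -> total_on FF subset ->
  nat_pairing (\bigcup_(S in FF) S).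
Proof.
move=> FFP tot; split.
- move=> x k y [S FS Sxy]; have [S_F _ _ _] := FFP S FS.
  by have [? ? [k' [y' Sy]]] := S_F _ _ _ Sxy; split => //; exists k', y', S.
- move=> p y y' [S1 FS1 H1] [S2 FS2 H2].
  have [S12|S21] := tot _ _ FS1 FS2.
    by have [_ fun2 _ _] := FFP _ FS2; exact: fun2 _ _ _ (S12 _ H1) H2.
  by have [_ fun1 _ _] := FFP _ FS1; exact: fun1 _ _ _ H1 (S21 _ H2).
- move=> p p' y [S1 FS1 H1] [S2 FS2 H2].
  have [S12|S21] := tot _ _ FS1 FS2.
    by have [_ _ inj2 _] := FFP _ FS2; exact: inj2 _ _ _ (S12 _ H1) H2.
  by have [_ _ inj1 _] := FFP _ FS1; exact: inj1 _ _ _ H1 (S21 _ H2).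
- move=> x [k [y [S FS Sxy]]] k'; have [_ _ _ tot_S] := FFP _ FS.
  by have [y' Sy'] := tot_S x (ex_intro _ k (ex_intro _ y Sxy)) k'; exists y', S.
Qed.

(* A fresh injective sequence [g] outside the domain is glued in as the pairing
   [(g i, k) |-> g (pickle (i, k))]. *)
Lemma nat_pairing_extend S : nat_pairing S ->
  infinite_set (F `\` pairing_dom S) ->
  exists2 S', nat_pairing S' & S `<` S'.
Proof.
move=> [S_F S_fun S_inj S_tot] /infiniteP/pcard_leP/injfunPex[g gfun ginj].
have gF i : F (g i) by have [] := gfun i I.
have gD i : ~ pairing_dom S (g i) by have [] := gfun i I.
have g_inj i j : g i = g j -> i = j by move=> e; apply: ginj; rewrite ?in_setE.
have domS x k y : S (x, k, y) -> pairing_dom S x by move=> Sxy; exists k, y.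
pose G := [set z | exists i k : nat, z = (g i, k, g (pickle (i, k)))].
exists (S `|` G); last first.
  split; first by move=> z Sz; left.
  move=> GS; apply: (gD 0%N); exists 0%N, (g (pickle (0%N, 0%N))).
  by apply: GS; right; exists 0%N, 0%N.
split.
- move=> x k y [Sxy|[i [k' [-> <- ->]]]].
    have [? ? [k'' [y'' Sy]]] := S_F _ _ _ Sxy.
    by split => //; exists k'', y''; left.
  split => //; exists 0%N, (g (pickle (pickle (i, k), 0%N))).
  by right; exists (pickle (i, k)), 0%N.
- move=> [x k] y y' [S1|[i [k1 [ex ek ey]]]] [S2|[i' [k2 [ex' ek' ey']]]].
  + exact: S_fun S1 S2.
  + by case: (gD i'); rewrite -ex'; apply: domS S1.
  + by case: (gD i); rewrite -ex; apply: domS S2.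
  + have eii : i = i' by apply: g_inj; rewrite -ex -ex'.
    by rewrite ey ey' eii -ek -ek'.
- move=> [x k] [x' k'] y [S1|[i [k1 [ex ek ey]]]] [S2|[i' [k2 [ex' ek' ey']]]].
  + exact: S_inj S1 S2.
  + by case: (gD (pickle (i', k2))); have [_ _] := S_F _ _ _ S1; rewrite -ey'.
  + by case: (gD (pickle (i, k1))); have [_ _] := S_F _ _ _ S2; rewrite -ey.
  + move: ey'; rewrite ey => /g_inj /(pcan_inj (@pickleK _)) [e1 e2].
    by rewrite ex ex' ek ek' e1 e2.
- move=> x [k [y [Sxy|[i [k' [ex _ _]]]]]] k1.
    by have [y' Sy'] := S_tot x (domS _ _ _ Sxy) k1; exists y'; left.
  by exists (g (pickle (i, k1))); right; exists i, k1; rewrite ex.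
Qed.

(* With a maximal pairing [S] on [D], the finite rest [F `\` D] is coded,
   together with the second coordinate, into the odd fibres above one point
   [d0] of [D], while [D * nat] uses the even fibres. *)
Lemma setX_nat_card_le : infinite_set F -> (F `*` [set: nat] #<= F)%card.
Proof.
move=> Finf; have [S [PS Smax]] := Zorn_bigcup nat_pairing_bigcup.
have [S_F _ S_inj S_tot] := PS; set D := pairing_dom S.
have finR : finite_set (F `\` D).
  apply: contrapT => /(@nat_pairing_extend S PS) [S' PS' SS'].
  exact: Smax SS' PS'.
have [d0 Dd0] : exists d0, D d0.
  apply: contrapT => noD; apply: Finf; apply: sub_finite_set finR => x Fx.
  by split => // Dx; apply: noD; exists x.
have /finite_set_countable/pcard_injP[r r_inj] := finR.
have /choice[pr prS] : forall p : T * nat, exists y, D p.1 -> S (p, y).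
  move=> [x k]; have [Dx|nDx] := pselect (D x); last by exists point.
  by have [y Sy] := S_tot x Dx k; exists y.
pose code (z : T * nat) : T :=
  if `[< D z.1 >] then pr (z.1, z.2.*2)
  else pr (d0, (pickle (r z.1, z.2)).*2.+1).
have codeS z : exists2 p, S (p, code z) &
    p = if `[< D z.1 >] then (z.1, z.2.*2) else (d0, (pickle (r z.1, z.2)).*2.+1).
  rewrite /code; case: asboolP => Dz.
    by exists (z.1, z.2.*2) => //; exact: prS.
  by exists (d0, (pickle (r z.1, z.2)).*2.+1) => //; exact: prS.
apply: (@card_le_inj _ _ _ _ code) => [[x k] [x' k']|[x k] _]; last first.
  by have [[? ?] /S_F[]] := codeS (x, k).
rewrite !in_setE => -[Fx _] [Fx' _] e.
have [p Sp ep] := codeS (x, k); have [p' Sp' ep'] := codeS (x', k').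
rewrite e in Sp; have := S_inj _ _ _ Sp Sp'; rewrite {}ep {}ep' /=.
case: asboolP => Dx; case: asboolP => Dx' [].
- by move=> -> /(can_inj doubleK) ->.
- by move=> _ /(congr1 odd) /=; rewrite !odd_double.
- by move=> _ /(congr1 odd) /=; rewrite !odd_double.
- move=> /(can_inj doubleK) /(pcan_inj (@pickleK _)) [rx ->].
  by rewrite (r_inj x x') // in_setE.
Qed.

End SetXnat.

Lemma infinite_set_nat_ge {X : set nat} :
  infinite_set X -> forall m, exists2 x, X x & (m <= x)%N.
Proof.
move=> Xinf m; apply: contrapT => noX; apply: Xinf.
apply: (sub_finite_set _ (finite_II m)) => x Xx /=.
by rewrite ltnNge; apply/negP => mx; apply: noX; exists x.
Qed.

Section CountBelow.
Variable X : set nat.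

Fixpoint count_below (N : nat) : nat :=
  if N is N'.+1 then (count_below N' + `[< X N' >])%N else 0%N.

Lemma count_belowS_in N : X N -> count_below N.+1 = (count_below N).+1.
Proof. by move=> XN; rewrite /= asboolT // addn1. Qed.

Lemma count_belowS_notin N : ~ X N -> count_below N.+1 = count_below N.
Proof. by move=> XN; rewrite /= asboolF // addn0. Qed.

Lemma count_below_homo : {homo count_below : m n / (m <= n)%N}.
Proof.
move=> m n; elim: n => [|n IH]; first by rewrite leqn0 => /eqP ->.
rewrite leq_eqVlt => /orP[/eqP -> //|]; rewrite ltnS => /IH /leq_trans; apply.
by rewrite /= leq_addr.
Qed.

Lemma count_below_inj m n : X m -> X n -> count_below m = count_below n -> m = n.
Proof.
have lt a b : X a -> (a < b)%N -> (count_below a < count_below b)%N.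
  by move=> Xa ab; rewrite -ltnS -count_belowS_in // ltnS count_below_homo.
move=> Xm Xn e; case: (ltngtP m n) => // [/(lt _ _ Xm)|/(lt _ _ Xn)].
  by rewrite e ltnn.
by rewrite e ltnn.
Qed.

Lemma count_below_unbounded :
  infinite_set X -> forall k, exists N, (k < count_below N)%N.
Proof.
move=> Xinf; elim=> [|k [N kN]].
  by have [x Xx] := infinite_setN0 Xinf; exists x.+1; rewrite count_belowS_in.
have [x Xx Nx] := infinite_set_nat_ge Xinf N.
exists x.+1; rewrite count_belowS_in // ltnS.
exact: leq_trans kN (count_below_homo _ _ Nx).
Qed.

Section IncreasingEnumeration.
Variable e : nat -> nat.
Hypothesis eX : incr_enum X e.

Lemma enum_mono : {mono e : m n / (m <= n)%N}.
Proof. by apply: leq_mono; case: eX. Qed.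

Lemma enum_cvgy : e n @[n --> \oo] --> \oo.
Proof.
have e_ge n : (n <= e n)%N.
  elim: n => // n IH; apply: leq_ltn_trans IH _; by rewrite (leqW_mono enum_mono).
apply/cvgnyPge => N; exists N => // n /= Nn; exact: leq_trans Nn (e_ge n).
Qed.

Lemma count_below_ltE k N : (k < count_below N)%N = (e k < N)%N.
Proof.
have [_ e_range] := eX.
elim: N k => [|N IH] k; first by rewrite !ltn0.
have [XN|XN] := pselect (X N); last first.
  rewrite count_belowS_notin // IH ltnS [(e k <= N)%N]leq_eqVlt.
  case: eqP => //= ekN.
  by case: XN; rewrite -e_range -ekN; exists k.
have [k0 _ ek0] : range e N by rewrite e_range.
have k0E : k0 = count_below N.
  apply/eqP; rewrite eqn_leq; apply/andP; split; rewrite leqNgt.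
    by rewrite -(leqW_mono enum_mono) ek0 -IH ltnn.
  by rewrite IH -ek0 ltnn.
rewrite count_belowS_in // !ltnS [(k <= _)%N]leq_eqVlt [(e k <= N)%N]leq_eqVlt.
by rewrite IH -k0E -ek0 (inj_eq (incn_inj enum_mono)).
Qed.

Lemma count_below_enum k : count_below (e k) = k.
Proof.
apply/eqP; rewrite eqn_leq; apply/andP; split; rewrite leqNgt.
  by rewrite count_below_ltE ltnn.
by rewrite -(leqW_mono enum_mono) -count_below_ltE ltnn.
Qed.

Lemma enum_count_below N : X N -> e (count_below N) = N.
Proof. by have [_ <-] := eX; case=> k _ <-; rewrite count_below_enum. Qed.

Lemma count_below_cvgy : count_below n @[n --> \oo] --> \oo.
Proof.
apply/cvgnyPge => N; exists (e N) => // n /= Nn.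
by rewrite -[X in (X <= _)%N](count_below_enum N) count_below_homo.
Qed.

End IncreasingEnumeration.
End CountBelow.

Lemma incr_enum_exists {X : set nat} : infinite_set X -> exists e, incr_enum X e.
Proof.
move=> /count_below_unbounded unb.
pose e k := (ex_minn (unb k)).-1.
have eP k : X (e k) /\ count_below X (e k) = k.
  rewrite /e; case: ex_minnP => -[|N] //= kN Nmin.
  have : (count_below X N <= k)%N.
    by rewrite leqNgt; apply/negP => /Nmin; rewrite ltnn.
  move: kN; case: asboolP => XN; rewrite ?addn0 ?addn1 => kN Nk.
    by split => //; apply/eqP; rewrite eqn_leq Nk -ltnS kN.
  by have := leq_trans kN Nk; rewrite ltnn.
exists e; split.
  move=> m n mn; rewrite ltnNge; apply/negP => /(count_below_homo X).
  by rewrite (eP n).2 (eP m).2 leqNgt mn.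
apply/seteqP; split => [_ [k _ <-]|x Xx]; first exact: (eP k).1.
exists (count_below X x) => //; apply: (@count_below_inj X _ _ (eP _).1 Xx).
by rewrite (eP _).2.
Qed.

Definition keep_on {R : realType} (X : set nat) (u : nat -> R) : nat -> R :=
  fun n => if `[< X n >] then u n else 0.

Lemma series_keep_on {R : realType} {X : set nat} {e : nat -> nat}
    (u : nat -> R) N :
  incr_enum X e -> series (keep_on X u) N = series (u \o e) (count_below X N).
Proof.
move=> eX; elim: N => [|N IH]; first by rewrite /series /= !big_geq.
rewrite seriesSr IH /keep_on; case: asboolP => XN.
  by rewrite count_belowS_in // seriesSr /= (enum_count_below _ _ eX).
by rewrite count_belowS_notin // addr0.
Qed.

Lemma cvg_series_keep_on {R : realType} {X : set nat} {e : nat -> nat}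
    (u : nat -> R) (l : R) :
  incr_enum X e ->
  (series (u \o e) n @[n --> \oo] --> l) <->
  (series (keep_on X u) n @[n --> \oo] --> l).
Proof.
move=> eX; split => H.
  have -> : series (keep_on X u) = series (u \o e) \o count_below X.
    by apply: funext => N /=; rewrite (series_keep_on _ _ eX).
  exact: cvg_comp (count_below_cvgy _ _ eX) H.
have -> : series (u \o e) = series (keep_on X u) \o e.
  apply: funext => k /=.
  by rewrite (series_keep_on _ _ eX) (count_below_enum _ _ eX).
exact: cvg_comp (enum_cvgy _ _ eX) H.
Qed.

Lemma subsum_toE {R : realType} (a : nat -> rat) (X : set nat) (l : R) :
  infinite_set X ->
  subsum_to a X l <-> series (keep_on X (rseq R a)) n @[n --> \oo] --> l.
Proof.
move=> Xinf; split => [[e [eX]]|H]; first by move/(cvg_series_keep_on _ _ eX).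
have [e eX] := incr_enum_exists Xinf.
by exists e; split => //; exact: (cvg_series_keep_on _ _ eX).2 H.
Qed.

Lemma series_crossing {R : realFieldType} {p : nat -> R} {t d : R} :
  (forall j, 0 <= p j) -> (forall j, p j < d) ->
  (forall B, exists M, B < series p M) -> 0 <= t ->
  exists M, t < series p M < t + d.
Proof.
move=> p_ge0 p_lt unb t_ge0; have [M tM Mmin] := ex_minnP (unb t).
exists M; rewrite tM /=; case: M tM Mmin => [|M] tM Mmin.
  by move: tM; rewrite /series /= big_geq // => /lt_le_trans/(_ t_ge0); rewrite ltxx.
have : series p M <= t by rewrite leNgt; apply/negP => /Mmin; rewrite ltnn.
by rewrite seriesSr; have := p_lt M; lra.
Qed.

Lemma cvg_series_trunc (R : numFieldType) (c : nat -> R) M :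
  series (fun n => if (n < M)%N then c n else 0) n @[n --> \oo] --> series c M.
Proof.
apply: cvg_near_cst; exists M => // n /= Mn.
rewrite -(subnKC Mn); elim: (n - M)%N => [|k IH].
  by rewrite addn0 /series /=; apply: eq_big_nat => j /andP[_ ->].
by rewrite addnS seriesSr IH ltnNge leq_addr /= addr0.
Qed.

Lemma series_from (V : zmodType) (g : nat -> V) N M : (N <= M)%N ->
  series (fun j => if (N <= j)%N then g j else 0) M = series g M - series g N.
Proof.
move=> NM; rewrite sub_series_geq // /series /= (big_cat_nat (leq0n N) NM) /=.
rewrite [X in X + _]big1_seq ?add0r; last first.
  by move=> j /andP[_]; rewrite mem_index_iota => /andP[_ jN]; rewrite leqNgt jN.
by apply: eq_big_nat => j /andP[-> _].
Qed.

Lemma keep_onN (R : realType) (X : set nat) (u : nat -> R) :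
  keep_on X (- u) = - keep_on X u.
Proof.
by rewrite !opprfctE; apply: funext => n; rewrite /keep_on; case: ifPn; rewrite ?oppr0.
Qed.

Definition flip (X : set nat) (l : seq nat) : set nat :=
  fun j => if j \in l then ~ X j else X j.

Lemma flip_nil (X : set nat) : flip X [::] = X.
Proof. by apply: funext => j; rewrite /flip in_nil. Qed.

Lemma flip_inf_coinf (X : set nat) l : inf_coinf X -> inf_coinf (flip X l).
Proof.
move=> [Xinf Xcinf]; split.
  apply: (sub_infinite_set _ (infinite_setD Xinf (finite_seq l))).
  by move=> j [Xj /negP jl]; rewrite /flip (negbTE jl).
apply: (sub_infinite_set _ (infinite_setD Xcinf (finite_seq l))).
by move=> j [Xj /negP jl]; rewrite /= /flip (negbTE jl).
Qed.

Definition flip_delta {R : realType} (X : set nat) (u : nat -> R) (n : nat) : R :=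
  if `[< X n >] then - u n else u n.

Lemma keep_on_flip (R : realType) (X : set nat) (u : nat -> R) l :
  keep_on (flip X l) u =
  keep_on X u + (fun n => if n \in l then flip_delta X u n else 0).
Proof.
rewrite addrfctE; apply: funext => n; rewrite /keep_on /flip /flip_delta.
case: (n \in l); case: (asboolP (X n)) => Xn; rewrite ?addr0 //.
- by rewrite asboolF ?addrN.
- by rewrite asboolT ?add0r.
Qed.

Section FlipRaise.
Context {R : realType} {u : nat -> R} {X : set nat} {l0 : R}.
Hypotheses (u_cvg0 : u n @[n --> \oo] --> 0)
  (pos_cvgy : series (fun n => Num.max (u n) 0) n @[n --> \oo] --> +oo)
  (keep_cvg : series (keep_on X u) n @[n --> \oo] --> l0).

(* Beyond [N] all the terms are shorter than the window; flipping the indices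
   in [N, M) that increase the sum, for the first [M] where the total gain
   exceeds [al - l0], therefore lands in the window. *)
Lemma flip_raise (al be : R) : l0 <= al -> al < be ->
  exists l, exists2 L, al < L < be &
    series (keep_on (flip X l) u) n @[n --> \oo] --> L.
Proof.
move=> l0al ab; pose d := be - al; have d_gt0 : 0 < d by rewrite subr_gt0.
have [N _ small] : \forall j \near \oo, `|flip_delta X u j| < d.
  apply: filterS (cvgr0_norm_lt _ u_cvg0 _ d_gt0) => j.
  by rewrite /flip_delta; case: asboolP; rewrite ?normrN.
pose g j := Num.max (flip_delta X u j) 0.
pose p j := if (N <= j)%N then g j else 0.
have p_ge0 j : 0 <= p j by rewrite /p; case: ifP; rewrite // le_max lexx orbT.
have p_lt j : p j < d.
  rewrite /p; case: ifPn => // /small hd.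
  by rewrite /g gt_max d_gt0 andbT; exact: le_lt_trans (ler_norm _) hd.
have gE n : series g n = series (fun n => Num.max (u n) 0) n - series (keep_on X u) n.
  rewrite /series /= -sumrB; apply: eq_bigr => j _.
  rewrite /g /flip_delta /keep_on; case: asboolP => _; last by rewrite subr0.
  by rewrite !maxEle; case: ifP; case: ifP; lra.
have p_unbounded B : exists M, B < series p M.
  near \oo => M; exists M.
  rewrite series_from ?(gE M); last by near: M; exact: nbhs_infty_ge.
  have : B + l0 + 1 + series g N <= series (fun n => Num.max (u n) 0) M.
    by near: M; exact: (cvgryPge _).1 pos_cvgy _.
  have : series (keep_on X u) M < l0 + 1 by near: M; apply: cvgr_lt keep_cvg _ _; lra.
  lra.
have t_ge0 : 0 <= al - l0 by rewrite subr_ge0.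
have [M /andP[lo hi]] := series_crossing p_ge0 p_lt p_unbounded t_ge0.
pose up := [seq j <- iota 0 M | (N <= j)%N && (0 < flip_delta X u j)].
exists up, (l0 + series p M); first by apply/andP; split; rewrite /d in hi; lra.
rewrite keep_on_flip seriesD; apply: cvgD => //.
have -> : (fun n => if n \in up then flip_delta X u n else 0) =
    (fun n => if (n < M)%N then p n else 0).
  apply: funext => n; rewrite mem_filter mem_iota /p /g.
  case: ltnP => nM; rewrite ?andbF ?andbT //=; case: leqP => //= Nn.
  by case: ltP.
exact: cvg_series_trunc.
Unshelve. all: by end_near.
Qed.

End FlipRaise.

Lemma flip_adjust {R : realType} {u : nat -> R} {X : set nat} {l0 al be : R} :
  u n @[n --> \oo] --> 0 ->
  series (fun n => Num.max (u n) 0) n @[n --> \oo] --> +oo ->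
  series (fun n => Num.min (u n) 0) n @[n --> \oo] --> -oo ->
  series (keep_on X u) n @[n --> \oo] --> l0 -> al < be ->
  exists l, exists2 L, al < L < be &
    series (keep_on (flip X l) u) n @[n --> \oo] --> L.
Proof.
move=> u_cvg0 pos_cvgy neg_cvgNy keep_cvg ab.
have [l0al|all0] := leP l0 al.
  exact: flip_raise u_cvg0 pos_cvgy keep_cvg _ _ l0al ab.
have [bel0|l0be] := leP be l0; last by exists [::], l0; rewrite ?flip_nil // all0 l0be.
have [l [L LI HL]] : exists l, exists2 L, - be < L < - al &
    series (keep_on (flip X l) (- u)) n @[n --> \oo] --> L.
  apply: (@flip_raise R (- u) X (- l0)); [| | | lra | lra].
  - by rewrite -oppr0; exact: cvgN.
  - have -> : (fun n => Num.max ((- u) n) 0) = - (fun n => Num.min (u n) 0).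
      by apply: funext => n; rewrite /= -[in LHS]oppr0 -oppr_min.
    by rewrite seriesN; apply/cvgNry.
  - by rewrite keep_onN seriesN; exact: cvgN.
exists l, (- L); first lra.
by rewrite -[u]opprK keep_onN seriesN; exact: cvgN.
Qed.

Lemma cvgr0_norm_le {R : realFieldType} (f g : nat -> R) :
  (forall n, `|f n| <= g n) -> g n @[n --> \oo] --> 0 -> f n @[n --> \oo] --> 0.
Proof.
move=> fg g_cvg0; apply/cvgr0Pnorm_lt => e e_gt0.
apply: filterS (cvgr0_norm_lt _ g_cvg0 _ e_gt0) => n /=.
by apply: le_lt_trans; apply: le_trans (fg n) (ler_norm _).
Qed.

Lemma series_harmonic_homo {R : numFieldType} :
  {homo series (@harmonic R) : m n / (m <= n)%N >-> m <= n}.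
Proof.
move=> m n mn; rewrite /series /=.
by apply: (nondecreasing_series (P := xpredT) (m := 0%N)) => // k _ _.
Qed.

Lemma series_harmonic_cvgy {R : realType} : series (@harmonic R) n @[n --> \oo] --> +oo.
Proof.
by apply: nondecreasing_dvgn_lt; [exact: series_harmonic_homo | exact: dvg_harmonic].
Qed.

Lemma series_harmonic_double {R : numFieldType} K : (0 < K)%N ->
  1 / 2 <= series (@harmonic R) K.*2 - series (@harmonic R) K.
Proof.
move=> K_gt0; rewrite sub_double_series.
apply: (@le_trans _ _ (\sum_(K <= k < K.*2) (K.*2%:R : R)^-1)); last first.
  apply: ler_sum_nat => k /andP[_ kK]; rewrite /harmonic /=.
  by rewrite lef_pV2 ?posrE ?ltr0n ?ler_nat //; lia.
rewrite sumr_const_nat; have -> : (K.*2 - K)%N = K by lia.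
have K_neq0 : (K%:R : R) != 0 by rewrite pnatr_eq0 -lt0n.
by rewrite -mul2n natrM invfM -[_ *+ K]mulr_natr -mulrA mulVf // mulr1 div1r.
Qed.

Lemma ratr_harmonic {R : realType} k : ratr (harmonic k : rat) = (harmonic k : R).
Proof. by rewrite /harmonic /= fmorphV rmorph_nat. Qed.

Lemma logn2_trunc_log t k :
  (2 ^ t <= k < 2 ^ t.+1)%N -> logn 2 (trunc_log 2 k).+1 = logn 2 t.+1.
Proof. by move=> h; rewrite (@trunc_log_eq 2 t k isT h). Qed.

Lemma logn2_succ_frequently i T : exists t, (T <= t)%N /\ logn 2 t.+1 = i.
Proof.
exists (2 ^ i * T.*2.+1).-1%N; have i_gt0 : (0 < 2 ^ i)%N by rewrite expn_gt0.
have : (T.*2.+1 <= 2 ^ i * T.*2.+1)%N by rewrite leq_pmull.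
split; first lia.
rewrite prednK ?muln_gt0 ?i_gt0 // lognM // pfactorK // logn_coprime ?addn0 //.
by rewrite coprime2n /= odd_double.
Qed.

Section Diagonal.
Variable Xs : nat -> set nat.
Hypothesis Xs_inf_coinf : forall i, inf_coinf (Xs i).

(* Pair [k] is served by the set [Xs (block_set k)], which is constant on the
   dyadic blocks [2^t <= k < 2^t.+1]. At stage [s] the term [1/(s./2).+1], of
   sign [(-1)^s], waits for the next position inside (for even [s]) or
   outside (for odd [s]) that set; meanwhile the sequence is 0. *)
Definition block_set (k : nat) : nat := logn 2 (trunc_log 2 k).+1.

Definition ready (n s : nat) : bool :=
  if odd s then ~~ `[< Xs (block_set s./2) n >] else `[< Xs (block_set s./2) n >].

Fixpoint stage (n : nat) : nat :=
  if n is n'.+1 then (stage n' + ready n' (stage n'))%N else 0%N.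

Definition diag_seq (n : nat) : rat :=
  if ready n (stage n) then
    (if odd (stage n) then - harmonic (stage n)./2 else harmonic (stage n)./2)
  else 0.

Lemma stageS n : stage n.+1 = (stage n + ready n (stage n))%N.
Proof. by []. Qed.

Lemma stage_homo : {homo stage : m n / (m <= n)%N}.
Proof.
move=> m n; elim: n => [|n IH]; first by rewrite leqn0 => /eqP ->.
rewrite leq_eqVlt => /orP[/eqP -> //|]; rewrite ltnS => /IH /leq_trans; apply.
by rewrite /= leq_addr.
Qed.

Lemma stage_progress n : exists n', (stage n < stage n')%N.
Proof.
set s := stage n.
have [x Xx nx] : exists2 x,
    (if odd s then ~` Xs (block_set s./2) else Xs (block_set s./2)) x & (n <= x)%N.
  have [Xinf Xcinf] := Xs_inf_coinf (block_set s./2).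
  by case: (odd s); exact: infinite_set_nat_ge.
exists x.+1 => /=; have [lt|] := ltnP s (stage x).
  exact: leq_trans lt (leq_addr _ _).
move=> xs; have -> : stage x = s by apply/eqP; rewrite eqn_leq xs stage_homo.
have -> : ready x s.
  by rewrite /ready; case: (odd s) Xx => Xx; [apply/negP => /asboolP | apply/asboolP].
by rewrite addn1.
Qed.

Lemma stage_surj v : exists n, stage n = v.
Proof.
elim: v => [|v [n nv]]; first by exists 0%N.
have [|m vm mmin] := ex_minnP (P := fun m => (v < stage m)%N).
  by rewrite -nv; exact: stage_progress.
case: m vm mmin => [//|m] vm mmin; exists m.+1; apply/eqP; rewrite eqn_leq vm andbT.
have : (stage m <= v)%N by rewrite leqNgt; apply/negP => /mmin; rewrite ltnn.
by rewrite /=; case: (ready m (stage m)); rewrite ?addn0 ?addn1 // => /leqW.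
Qed.

Lemma half_stage_cvgy (f : nat -> nat) :
  (forall m, m./2 <= f m)%N -> f (stage n) @[n --> \oo] --> \oo.
Proof.
move=> f_ge; apply/cvgnyPge => N; have [n0 n0E] := stage_surj N.*2.
exists n0 => // n /= /stage_homo; rewrite n0E => Nn.
by apply: leq_trans (f_ge _); rewrite -[N]doubleK half_leq.
Qed.

Variable R : realType.

Lemma diag_seqE n : rseq R diag_seq n =
  if ready n (stage n) then
    (if odd (stage n) then - harmonic (stage n)./2 else harmonic (stage n)./2)
  else 0.
Proof.
rewrite /rseq /diag_seq; case: ifP => _; last by rewrite rmorph0.
by case: ifP => _; rewrite ?rmorphN; [congr (- _)|]; exact: ratr_harmonic.
Qed.

Lemma series_diag n :
  series (rseq R diag_seq) n = if odd (stage n) then harmonic (stage n)./2 else 0.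
Proof.
elim: n => [|n IH]; first by rewrite /series /= big_geq.
rewrite seriesSr IH diag_seqE stageS; case: ready; last by rewrite addn0 addr0.
rewrite addn1 oddS; case: ifP => odd_s /=; first by rewrite addrN.
by rewrite add0r; congr harmonic; lia.
Qed.

Lemma series_diag_pos n : series (fun n => Num.max (rseq R diag_seq n) 0) n =
  series (@harmonic R) (uphalf (stage n)).
Proof.
elim: n => [|n IH]; first by rewrite /series /= !big_geq.
rewrite seriesSr IH diag_seqE stageS; case: ready; last by rewrite addn0 maxxx addr0.
rewrite addn1; case: ifP => odd_s.
  have -> : uphalf (stage n).+1 = uphalf (stage n) by lia.
  by rewrite max_r ?addr0 // oppr_le0 harmonic_ge0.
have -> : uphalf (stage n).+1 = (uphalf (stage n)).+1 by lia.
have -> : (stage n)./2 = uphalf (stage n) by lia.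
by rewrite seriesSr max_l ?harmonic_ge0.
Qed.

Lemma series_diag_neg n : series (fun n => Num.min (rseq R diag_seq n) 0) n =
  - series (@harmonic R) (stage n)./2.
Proof.
elim: n => [|n IH]; first by rewrite /series /= !big_geq // oppr0.
rewrite seriesSr IH diag_seqE stageS; case: ready; last by rewrite addn0 minxx addr0.
rewrite addn1; case: ifP => odd_s.
  have -> : (stage n).+1./2 = (stage n)./2.+1 by lia.
  by rewrite seriesSr opprD min_l // oppr_le0 harmonic_ge0.
have -> : (stage n).+1./2 = (stage n)./2 by lia.
by rewrite min_r ?harmonic_ge0 ?addr0.
Qed.

Lemma S_cc_diag_seq : S_cc R diag_seq.
Proof.
have h_cvg0 : harmonic (stage n)./2 @[n --> \oo] --> (0 : R).
  exact: cvg_comp (half_stage_cvgy _ (fun=> leqnn _)) cvg_harmonic.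
split; [|split; [|split]].
- apply: (cvgr0_norm_le (rseq R diag_seq) _ _ h_cvg0) => n; rewrite diag_seqE.
  case: ifP => _; last by rewrite normr0 harmonic_ge0.
  by case: ifP => _; rewrite ?normrN ger0_norm ?harmonic_ge0.
- exists 0; apply: (cvgr0_norm_le (series (rseq R diag_seq)) _ _ h_cvg0) => n.
  by rewrite series_diag; case: ifP => _; rewrite ?normr0 ?ger0_norm ?harmonic_ge0.
- have -> : series (fun n => Num.max (rseq R diag_seq n) 0) =
      series (@harmonic R) \o (fun n => uphalf (stage n)).
    by apply: funext => n; rewrite series_diag_pos.
  apply: cvg_comp (half_stage_cvgy _ _) series_harmonic_cvgy => m.
  by rewrite uphalf_half leq_addl.
- have -> : series (fun n => Num.min (rseq R diag_seq n) 0) =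
      - (series (@harmonic R) \o (fun n => (stage n)./2)).
    by apply: funext => n; rewrite series_diag_neg.
  apply/cvgNrNy.
  exact: cvg_comp (half_stage_cvgy _ (fun=> leqnn _)) series_harmonic_cvgy.
Qed.

(* On a block served by [Xs i], the subseries along [Xs i] collects exactly
   the positive terms. *)
Lemma series_keep_on_block i t n1 d :
  logn 2 t.+1 = i -> stage n1 = ((2 ^ t).*2)%N ->
  (stage (n1 + d) <= (2 ^ t.+1).*2)%N ->
  series (keep_on (Xs i) (rseq R diag_seq)) (n1 + d)%N -
    series (keep_on (Xs i) (rseq R diag_seq)) n1 =
  series (@harmonic R) (uphalf (stage (n1 + d)%N)) - series (@harmonic R) (2 ^ t)%N.
Proof.
move=> ti n1E; elim: d => [|d IH]; first by rewrite addn0 n1E uphalf_double !subrr.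
rewrite addnS => hd.
have hd' : (stage (n1 + d) <= (2 ^ t.+1).*2)%N by apply: leq_trans hd; exact: stage_homo.
have e2 : (2 ^ t.+1 = (2 ^ t).*2)%N by rewrite expnS mul2n.
have hlo : ((2 ^ t).*2 <= stage (n1 + d))%N by rewrite -n1E stage_homo ?leq_addr.
rewrite seriesSr addrAC (IH hd') /keep_on diag_seqE.
move: hd; rewrite stageS.
case ready_s: (ready (n1 + d) (stage (n1 + d))) => /= hd; last first.
  by rewrite addn0; case: ifP => _; rewrite addr0.
have hp : block_set (stage (n1 + d))./2 = i.
  by rewrite -ti; apply: logn2_trunc_log; move: hd hlo; rewrite e2; lia.
move: ready_s; rewrite /ready hp addn1.
case: ifP => odd_s ready_s.
  have -> : uphalf (stage (n1 + d)).+1 = uphalf (stage (n1 + d)) by lia.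
  by case: asboolP ready_s => // _ _; rewrite addr0.
have -> : uphalf (stage (n1 + d)).+1 = (uphalf (stage (n1 + d))).+1 by lia.
have -> : (stage (n1 + d))./2 = uphalf (stage (n1 + d)) by lia.
by case: asboolP ready_s => // _ _; rewrite seriesSr addrAC.
Qed.

Lemma diag_seq_no_subsum i : ~ exists l : R, subsum_to diag_seq (Xs i) l.
Proof.
move=> [l /(subsum_toE _ _ _ (Xs_inf_coinf i).1) keep_cvg].
have [N0 _ near_l] := (cvgrPdist_lt _ _).1 keep_cvg (1 / 8) ltac:(lra).
have [t [tN0 ti]] := logn2_succ_frequently i (stage N0).
have [n1 n1E] := stage_surj ((2 ^ t).*2)%N.
have [n2 n2E] := stage_surj ((2 ^ t.+1).*2)%N.
have e2 : (2 ^ t.+1 = (2 ^ t).*2)%N by rewrite expnS mul2n.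
have t_lt : (t < 2 ^ t)%N by apply: ltn_expl.
have t_pos : (0 < 2 ^ t)%N by rewrite expn_gt0.
have N0n1 : (N0 <= n1)%N.
  by rewrite leqNgt; apply/negP => /ltnW /stage_homo; rewrite n1E; lia.
have n12 : (n1 <= n2)%N.
  by rewrite leqNgt; apply/negP => /ltnW /stage_homo; rewrite n1E n2E e2; lia.
have := @series_keep_on_block i t n1 (n2 - n1)%N ti n1E.
rewrite subnKC // n2E uphalf_double => /(_ (leqnn _)) block.
have := @series_harmonic_double R _ t_pos; rewrite -e2 -block.
have := near_l _ N0n1; have := near_l _ (leq_trans N0n1 n12).
rewrite /= !ltr_norml => /andP[a1 a2] /andP[b1 b2].
lra.
Qed.

End Diagonal.

Lemma evens_inf_coinf : inf_coinf [set n | ~~ odd n].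
Proof.
split; apply/infiniteP.
  apply: (@card_le_inj _ _ _ _ double) => [m n _ _|n _ /=]; last by rewrite odd_double.
  exact: (can_inj doubleK).
apply: (@card_le_inj _ _ _ _ (fun n => n.*2.+1)) => [m n _ _ []|n _ /=].
  exact: (can_inj doubleK).
by rewrite odd_double.
Qed.

Lemma ss_c_family_uncountable {R : realType} {F : set (set nat)} :
  ss_c_family R F -> ~ countable F.
Proof.
move=> [F_ic F_ss] /pcard_injP[f f_inj].
have /choice[Ys YsP] : forall n, exists Y,
    inf_coinf Y /\ forall X, F X -> f X = n -> Y = X.
  move=> n; have [[X FX fX]|noX] := pselect (exists2 X, F X & f X = n).
    exists X; split=> [|X' FX' fX']; first exact: F_ic.
    by apply: f_inj; rewrite ?in_setE // fX fX'.
  exists [set n | ~~ odd n]; split=> [|X FX fX]; first exact: evens_inf_coinf.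
  by case: noX; exists X.
have Ys_ic n : inf_coinf (Ys n) by have [] := YsP n.
have [X FX [l sub]] := F_ss _ (@S_cc_diag_seq _ Ys_ic R).
apply: (@diag_seq_no_subsum _ Ys_ic R (f X)); exists l.
by rewrite ((YsP (f X)).2 X FX erefl).
Qed.

Definition flips (F : set (set nat)) : set (set nat) :=
  [set Y | exists X l, F X /\ Y = flip X l].

Lemma flips_card_le (F : set (set nat)) : infinite_set F -> (flips F #<= F)%card.
Proof.
move=> Finf.
pose fl (p : set nat * seq nat) := flip p.1 p.2.
apply: (@card_le_trans _ _ _ (fl @` (F `*` [set: seq nat]))).
  by apply: subset_card_le => Y [X [l [FX ->]]]; exists (X, l).
apply: (card_le_trans (card_image_le _ _)).
apply: (card_le_trans _ (@setX_nat_card_le _ F Finf)).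
apply: (@card_le_inj _ _ _ _ (fun p : set nat * seq nat => (p.1, pickle p.2))).
  by move=> [X l] [X' l'] _ _ /= [-> /(pcan_inj (@pickleK _)) ->].
by move=> [X l] [FX _].
Qed.

Lemma flips_inf_coinf (F : set (set nat)) : F `<=` inf_coinf -> flips F `<=` inf_coinf.
Proof. by move=> F_ic _ [X [l [FX ->]]]; apply: flip_inf_coinf; exact: F_ic. Qed.

Lemma flips_subsum_window {R : realType} {F : set (set nat)} : ss_c_family R F ->
  forall a, S_cc R a -> forall al be : R, al < be ->
  exists2 Y, flips F Y & exists2 L, al < L < be & subsum_to a Y L.
Proof.
move=> [F_ic F_ss] a Sa al be ab.
have [X FX [l0 /(subsum_toE _ _ _ (F_ic _ FX).1) keep_cvg]] := F_ss a Sa.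
have [u_cvg0 [_ [pos_cvgy neg_cvgNy]]] := Sa.
have [l [L LI HL]] := flip_adjust u_cvg0 pos_cvgy neg_cvgNy keep_cvg ab.
exists (flip X l); first by exists X, l.
by exists L => //; apply/subsum_toE => //; have [] := flip_inf_coinf X l (F_ic _ FX).
Qed.

Lemma ss_l_family_flips {R : realType} {A : set R} {F : set (set nat)} :
  (exists a b : R, a < b /\ `]a, b[ `<=` A) ->
  ss_c_family R F -> ss_l_family A (flips F).
Proof.
move=> [a0 [b0 [ab sub]]] HF; split; first by apply: flips_inf_coinf; case: HF.
move=> a Sa; have [Y FY [L LI HL]] := flips_subsum_window HF a Sa _ _ ab.
by exists Y => //; exists L => //; apply: sub; rewrite /= in_itv.
Qed.

Lemma ss_e_family_flips {R : realType} {eps : R} {F : set (set nat)} :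
  0 < eps -> ss_c_family R F -> ss_e_family eps (flips F).
Proof.
move=> eps_gt0 HF; split; first by apply: flips_inf_coinf; case: HF.
move=> a Sa; have [_ [[s s_cvg] _]] := Sa.
have ab : s - eps < s + eps by lra.
have [Y FY [L /andP[Ls sL] HL]] := flips_subsum_window HF a Sa _ _ ab.
exists Y => //; exists s, L; do !split => //.
by rewrite ltr_norml; apply/andP; split; lra.
Qed.

Lemma ss_e_family_c {R : realType} {eps : R} {F : set (set nat)} :
  ss_e_family eps F -> ss_c_family R F.
Proof.
move=> [F_ic F_ss]; split => // a /F_ss[X FX [_ [l [_ [sub _]]]]].
by exists X => //; exists l.
Qed.

Lemma ss_l_family_c {R : realType} {A : set R} {F : set (set nat)} :
  ss_l_family A F -> ss_c_family R F.
Proof.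
by move=> [F_ic F_ss]; split => // a /F_ss[X FX [l _ sub]]; exists X => //; exists l.
Qed.

Lemma ss_c_family_flips_card_le {R : realType} {F : set (set nat)} :
  ss_c_family R F -> (flips F #<= F)%card.
Proof.
move=> /ss_c_family_uncountable F_unc; apply: flips_card_le => /finite_set_countable.
exact: F_unc.
Qed.

Theorem mainTheorem12 (R : realType) (eps : R) (A : set R) :
  0 < eps ->
  (exists a b : R, a < b /\ `]a, b[ `<=` A) ->
  same_min_card (ss_e_family eps) (ss_l_family A) /\
  same_min_card (ss_l_family A) (@ss_c_family R).
Proof.
move=> eps_gt0 A_itv; split; split.
- move=> F /ss_e_family_c F_c; exists (flips F); split; first exact: ss_l_family_flips.
  exact: ss_c_family_flips_card_le F_c.
- move=> G /ss_l_family_c G_c; exists (flips G); split; first exact: ss_e_family_flips.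
  exact: ss_c_family_flips_card_le G_c.
- by move=> F F_l; exists F; split; [exact: ss_l_family_c F_l | exact: card_lexx].
- move=> G G_c; exists (flips G); split; first exact: ss_l_family_flips.
  exact: ss_c_family_flips_card_le G_c.
Qed.
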